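(* Let $G$ be a group with unit $e$, $X$ a set and $(X_g,\alpha_g)_{g\in G}$ a lax partial action of $G$ on $X$. The following are equivalent: (i) $(X_g,\alpha_g)$ is a partial action; (ii) the inclusion $\{(h,g,x)\in G\times G\times X: x\in X_{g^{-1}},\ \alpha_g(x)\in X_{h^{-1}}\}\subseteq \{(h,g,x)\in G\times G\times X : x\in X_{g^{-1}}\cap X_{(hg)^{-1}}\}$ is a bijection (i.e. the two sets are equal); (iii) for each $g\in G$ one has $\alpha_g(X_{g^{-1}})\subseteq X_g$.
   Context: A partial action datum of $G$ on $X$ is a family of subsets $X_g\subseteq X$ ($g\in G$) with maps $\alpha_g:X_{g^{-1}}\to X$. It is a partial action if (PA1) $X_e=X$ and $\alpha_e=\mathrm{id}_X$; (PA2) $\alpha_g(X_{g^{-1}}\cap X_h)\subseteq X_g\cap X_{gh}$ for all $g,h$; (PA3) $\alpha_h\circ\alpha_g=\alpha_{hg}$ on $X_{g^{-1}}\cap X_{(hg)^{-1}}$. It is a lax partial action if (LPA1) $X_e=X$ and $\alpha_e=\mathrm{id}_X$; (LPA2) $X_{g^{-1}}\cap\alpha_g^{-1}(X_{h^{-1}})\subseteq X_{(hg)^{-1}}$; (LPA3) $\alpha_h\circ\alpha_g=\alpha_{hg}$ on $X_{g^{-1}}\cap\alpha_g^{-1}(X_{h^{-1}})$. (By (LPA2) the first set in (ii) is contained in the second.) *)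

Record is_group (G : Type) (mul : G -> G -> G) (e : G) (inv : G -> G) : Prop := {
  grp_assoc : forall a b c, mul a (mul b c) = mul (mul a b) c;
  grp_mul1g : forall a, mul e a = a;
  grp_mulg1 : forall a, mul a e = a;
  grp_mulVg : forall a, mul (inv a) a = e;
  grp_mulgV : forall a, mul a (inv a) = e
}.

(** A partial action datum: Xs g is the subset X_g of X (a predicate),
    and alpha g is the map alpha_g : X_{g^{-1}} -> X, represented as a total
    function X -> X of which only the values on X_{g^{-1}} are relevant
    (all conditions below only evaluate alpha g on X_{g^{-1}}). *)

Definition partial_action (G X : Type) (mul : G -> G -> G) (e : G) (inv : G -> G)
  (Xs : G -> X -> Prop) (alpha : G -> X -> X) : Prop :=
  ((forall x, Xs e x) /\ (forall x, alpha e x = x)) /\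
  (forall g h x, Xs (inv g) x -> Xs h x ->
      Xs g (alpha g x) /\ Xs (mul g h) (alpha g x)) /\
  (forall g h x, Xs (inv g) x -> Xs (inv (mul h g)) x ->
      alpha h (alpha g x) = alpha (mul h g) x).

Definition lax_partial_action (G X : Type) (mul : G -> G -> G) (e : G) (inv : G -> G)
  (Xs : G -> X -> Prop) (alpha : G -> X -> X) : Prop :=
  ((forall x, Xs e x) /\ (forall x, alpha e x = x)) /\
  (forall g h x, Xs (inv g) x -> Xs (inv h) (alpha g x) -> Xs (inv (mul h g)) x) /\
  (forall g h x, Xs (inv g) x -> Xs (inv h) (alpha g x) ->
      alpha h (alpha g x) = alpha (mul h g) x).


(** Condition (iii) makes [alpha (inv g)] a left inverse of [alpha g] on
    [X_{g^-1}], by (LPA3).  Pulling a point of [X_{g^-1}] forward by [alpha g]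
    and back by [alpha (inv g)] then turns (LPA2) into its own converse and
    into (PA2), and (PA3) follows from (LPA3).  Conversely, (PA2) with
    [h = e] and the equality (ii) at [h = g^-1] both specialise to (iii). *)

Section LaxPartialAction.

Variables (G X : Type) (mul : G -> G -> G) (e : G) (inv : G -> G).
Hypothesis HG : is_group G mul e inv.

Let mulA := grp_assoc _ _ _ _ HG.
Let mul1g := grp_mul1g _ _ _ _ HG.
Let mulg1 := grp_mulg1 _ _ _ _ HG.
Let mulVg := grp_mulVg _ _ _ _ HG.
Let mulgV := grp_mulgV _ _ _ _ HG.

Lemma invg_unique a b : mul a b = e -> b = inv a.
Proof.
  intros Hab.
  rewrite <- (mul1g b), <- (mulVg a), <- mulA, Hab, mulg1.
  reflexivity.
Qed.

Lemma invgK a : inv (inv a) = a.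
Proof. symmetry; apply invg_unique, mulVg. Qed.

Lemma invg1 : inv e = e.
Proof. symmetry; apply invg_unique, mulg1. Qed.

Lemma invgM a b : inv (mul a b) = mul (inv b) (inv a).
Proof.
  symmetry; apply invg_unique.
  rewrite mulA, <- (mulA a b), mulgV, mulg1, mulgV.
  reflexivity.
Qed.

Variables (Xs : G -> X -> Prop) (alpha : G -> X -> X).

Definition image_sub_domain : Prop :=
  forall g x, Xs (inv g) x -> Xs g (alpha g x).

Definition composable_eq : Prop :=
  forall h g x,
    (Xs (inv g) x /\ Xs (inv h) (alpha g x)) <->
    (Xs (inv g) x /\ Xs (inv (mul h g)) x).

Lemma partial_action_image_sub_domain :
  partial_action G X mul e inv Xs alpha -> image_sub_domain.
Proof.
  intros [[dom_e _] [pa_dom _]] g x Hx.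
  exact (proj1 (pa_dom g e x Hx (dom_e x))).
Qed.

Hypothesis dom_e : forall x, Xs e x.
Hypothesis alpha_e : forall x, alpha e x = x.
Hypothesis lax_dom : forall g h x,
  Xs (inv g) x -> Xs (inv h) (alpha g x) -> Xs (inv (mul h g)) x.
Hypothesis lax_comp : forall g h x,
  Xs (inv g) x -> Xs (inv h) (alpha g x) -> alpha h (alpha g x) = alpha (mul h g) x.

Lemma composable_eq_image_sub_domain : composable_eq -> image_sub_domain.
Proof.
  intros Heq g x Hx.
  assert (Hx' : Xs (inv g) x /\ Xs (inv (mul (inv g) g)) x).
  { rewrite mulVg, invg1; auto. }
  destruct (proj2 (Heq (inv g) g x) Hx') as [_ Himg].
  rewrite invgK in Himg.
  exact Himg.
Qed.

Section ImageSubDomain.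

Hypothesis Himg : image_sub_domain.

Lemma Xs_invV_alpha g x : Xs (inv g) x -> Xs (inv (inv g)) (alpha g x).
Proof. intros Hx; rewrite invgK; auto. Qed.

Lemma alpha_invK g x : Xs (inv g) x -> alpha (inv g) (alpha g x) = x.
Proof.
  intros Hx.
  rewrite lax_comp, mulVg; auto using Xs_invV_alpha.
Qed.

Lemma Xs_mul_alpha g h x : Xs (inv g) x -> Xs h x -> Xs (mul g h) (alpha g x).
Proof.
  intros Hx Hh.
  assert (Hback : Xs (inv (inv h)) (alpha (inv g) (alpha g x))).
  { rewrite alpha_invK, invgK; auto. }
  pose proof (lax_dom (inv g) (inv h) (alpha g x) (Xs_invV_alpha g x Hx) Hback)
    as Hgh.
  rewrite invgM, !invgK in Hgh.
  exact Hgh.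
Qed.

Lemma lax_dom_converse g h x :
  Xs (inv g) x -> Xs (inv (mul h g)) x -> Xs (inv h) (alpha g x).
Proof.
  intros Hx Hhg.
  pose proof (Xs_mul_alpha g _ x Hx Hhg) as Hh.
  rewrite invgM, mulA, mulgV, mul1g in Hh.
  exact Hh.
Qed.

Lemma image_sub_domain_partial_action : partial_action G X mul e inv Xs alpha.
Proof.
  split; [split; assumption |]. split.
  - intros g h x Hx Hh.
    split; [apply Himg | apply Xs_mul_alpha]; assumption.
  - intros g h x Hx Hhg.
    apply lax_comp; [| apply lax_dom_converse]; assumption.
Qed.

Lemma image_sub_domain_composable_eq : composable_eq.
Proof.
  intros h g x; split; intros [Hx Hh]; split; auto.
  apply lax_dom_converse; assumption.
Qed.

End ImageSubDomain.

Lemma partial_action_iff_image_sub_domain :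
  partial_action G X mul e inv Xs alpha <-> image_sub_domain.
Proof.
  split.
  - exact partial_action_image_sub_domain.
  - exact image_sub_domain_partial_action.
Qed.

Lemma partial_action_iff_composable_eq :
  partial_action G X mul e inv Xs alpha <-> composable_eq.
Proof.
  split.
  - intros Hpa.
    apply image_sub_domain_composable_eq, partial_action_image_sub_domain, Hpa.
  - intros Heq.
    apply image_sub_domain_partial_action, composable_eq_image_sub_domain, Heq.
Qed.

End LaxPartialAction.

Theorem mainTheorem3 (G X : Type) (mul : G -> G -> G) (e : G) (inv : G -> G)
  (HG : is_group G mul e inv)
  (Xs : G -> X -> Prop) (alpha : G -> X -> X)
  (Hlax : lax_partial_action G X mul e inv Xs alpha) :
  (* (i) <-> (ii): the two subsets of G x G x X coincide *)
  (partial_action G X mul e inv Xs alpha <->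
     (forall (h g : G) (x : X),
        (Xs (inv g) x /\ Xs (inv h) (alpha g x)) <->
        (Xs (inv g) x /\ Xs (inv (mul h g)) x))) /\
  (* (i) <-> (iii) *)
  (partial_action G X mul e inv Xs alpha <->
     (forall (g : G) (x : X), Xs (inv g) x -> Xs g (alpha g x))).
Proof.
  destruct Hlax as [[dom_e alpha_e] [lax_dom lax_comp]].
  split.
  - exact (partial_action_iff_composable_eq G X mul e inv HG Xs alpha
             dom_e alpha_e lax_dom lax_comp).
  - exact (partial_action_iff_image_sub_domain G X mul e inv HG Xs alpha
             dom_e alpha_e lax_dom lax_comp).
Qed.
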